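(* Let $k\ge2$, let $r=2^k$, and let $T_r$ be the $(k,r)$-tree, with $n=|T_r|$ nodes. Let $X$ be the atomic strongly-stable sequence with respect to $T_r$, whose length is $m=2^{rk}$. Then, as $k\to\infty$, $$\mathrm{cost}(OPT,X,T_r)=\Theta\Big(m\cdot\frac{\lg n}{\lg\lg\lg n}\Big).$$
   Context: $\lg$ is the base-2 logarithm. Binary search tree model. An algorithm $A$ serves a query sequence $X=[x_1,\dots,x_m]$ from an initial BST $T_0$. Before serving $x_t$ it holds a BST $T_{t-1}$; it searches $x_t$ from the root and may then restructure the tree by rotations into $T_t$. Let $P_t$ be the set of nodes on the root-to-$x_t$ path of $T_{t-1}$, and let $U_t$ be the node set of the minimal subtree containing all edges rotated in transforming $T_{t-1}$ into $T_t$. The cost at time $t$ is $|P_t\cup U_t|$, and $\mathrm{cost}(A,X,T_0)$ is the sum of these costs. $OPT$ denotes an algorithm of minimum cost on $(X,T_0)$ that knows all of $X$ in advance. $(k,r)$-trees. Let $k\ge2$ and $r\ge0$ be integers. $T_0$ is a single node. For $r\ge1$, $T_r$ has $k$ trunk nodes $w_1,\dots,w_k$: $w_1$ is the root, $w_2$ is the right child of $w_1$, and $w_{j+1}$ is the left child of $w_j$ for $2\le j\le k-1$. The left child of $w_k$ is a single leaf (the actual leaf). Each of the remaining $k$ child positions of trunk nodes (the left child of $w_1$ and the right child of $w_j$ for $2\le j\le k$) is the root of a copy of $T_{r-1}$. Keys are $1,\dots,|T_r|$ in symmetric order. Stable sequences. Let $T$ be a full binary search tree, and let $X$ be a query sequence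 consisting only of keys stored at leaves of $T$. For an inner node $v$, let $X_v$ be the subsequence of $X$ consisting of the queries to keys in the subtree of $v$. The node $v$ is strongly-stable if consecutive queries of $X_v$ alternate between the left and right subtrees of $v$. $X$ is strongly-stable if every inner node of $T$ is strongly-stable. The atomic sequence is the shortest such sequence all of whose repetitions are again strongly-stable for $T$. *)

From Stdlib Require Import Reals.
From mathcomp Require Import all_boot.

Set Implicit Arguments.
Unset Strict Implicit.
Unset Printing Implicit Defensive.

(* Binary search trees with nat keys.  [Nil] is the empty tree (an     *)
(* absent child); a leaf node is [Node Nil x Nil].                     *)
Inductive bst := Nil | Node of bst & nat & bst.

Fixpoint keys (t : bst) : seq nat :=
  if t is Node l x r then keys l ++ x :: keys r else [::].

Fixpoint bst_size (t : bst) : nat :=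
  if t is Node l _ r then bst_size l + 1 + bst_size r else 0.

Fixpoint leaf_keys (t : bst) : seq nat :=
  match t with
  | Nil => [::]
  | Node Nil x Nil => [:: x]
  | Node l _ r => leaf_keys l ++ leaf_keys r
  end.

Fixpoint subtrees (t : bst) : seq bst :=
  if t is Node l x r then t :: subtrees l ++ subtrees r else [::].

Fixpoint subtree_at (y : nat) (t : bst) : bst :=
  match t with
  | Nil => Nil
  | Node l x r =>
      if y == x then t else if y < x then subtree_at y l else subtree_at y r
  end.

Fixpoint path_keys (t : bst) (x : nat) : seq nat :=
  match t with
  | Nil => [::]
  | Node l y r =>
      y :: (if x == y then [::] else if x < y then path_keys l x else path_keys r x)
  end.

Fixpoint parent_of (y : nat) (t : bst) : option nat :=
  match t with
  | Nil => None
  | Node l x r =>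
      if y == x then None
      else
        let c := if y < x then l else r in
        match c with
        | Node _ z _ => if y == z then Some x else parent_of y c
        | Nil => None
        end
  end.

(* rotate the node with key a up over its parent (rotating the edge
   between them); None if a is the root or absent *)
Fixpoint rot_up (a : nat) (t : bst) : option bst :=
  match t with
  | Nil => None
  | Node l x r =>
      if a == x then None
      else if a < x then
        match l with
        | Node ll y lr =>
            if a == y then Some (Node ll y (Node lr x r))
            else omap (fun l' => Node l' x r) (rot_up a l)
        | Nil => None
        end
      else
        match r with
        | Node rl y rr =>
            if a == y then Some (Node (Node l x rl) y rr)
            else omap (fun r' => Node l x r') (rot_up a r)
        | Nil => None
        end
  end.

(* apply a sequence of rotations; returns the final tree together with
   the list of endpoints of all rotated edges *)
Fixpoint run_rots (rs : seq nat) (t : bst) : option (bst * seq nat) :=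
  match rs with
  | [::] => Some (t, [::])
  | a :: rs' =>
      match rot_up a t, parent_of a t with
      | Some t', Some p =>
          omap (fun tS => (tS.1, a :: p :: tS.2)) (run_rots rs' t')
      | _, _ => None
      end
  end.

(* membership of node y in the minimal (connected) subtree of t containing
   the node set S: the subtree of y meets S, and neither child subtree of y
   contains all of S (i.e. y lies on a path between a node of S and the
   lowest common ancestor of S). *)
Definition in_span (t : bst) (S : seq nat) (y : nat) : bool :=
  match subtree_at y t with
  | Nil => false
  | Node l _ r =>
      [&& has (fun s => s \in keys (subtree_at y t)) S,
          ~~ all (fun s => s \in keys l) S & ~~ all (fun s => s \in keys r) S]
  end.

(* cost of one step: |P_t ∪ U_t|, P_t the search path of x in t, U_t the
   node set of the minimal subtree of t containing all rotated edges *)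
Definition step_cost (t : bst) (x : nat) (S : seq nat) : nat :=
  size [seq y <- keys t | (y \in path_keys t x) || in_span t S y].

(* total cost of serving X from t with the rotation schedule R
   (R's i-th entry is the list of rotations performed after the i-th search) *)
Fixpoint serve (t : bst) (X : seq nat) (R : seq (seq nat)) : option nat :=
  match X, R with
  | [::], [::] => Some 0
  | x :: X', rs :: R' =>
      match run_rots rs t with
      | Some (t', E) => omap (addn (step_cost t x E)) (serve t' X' R')
      | None => None
      end
  | _, _ => None
  end.

Definition opt_cost (T0 : bst) (X : seq nat) (c : nat) : Prop :=
  (exists R, serve T0 X R = Some c) /\
  (forall R c', serve T0 X R = Some c' -> c <= c').

Definition leafnode : bst := Node Nil 0 Nil.

(* chain j S : trunk nodes w_{k-j+1},...,w_k; each has right child S, the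
   top-down left spine ends in the actual leaf *)
Fixpoint chain (j : nat) (Sub : bst) : bst :=
  if j is j'.+1 then Node (chain j' Sub) 0 Sub else leafnode.

Fixpoint kr_shape (k r : nat) : bst :=
  if r is r'.+1 then
    let Sub := kr_shape k r' in Node Sub 0 (chain k.-1 Sub)
  else leafnode.

Fixpoint number (t : bst) (o : nat) : bst :=
  match t with
  | Nil => Nil
  | Node l _ r =>
      let x := o + bst_size l + 1 in Node (number l o) x (number r x)
  end.

Definition kr_tree (k r : nat) : bst := number (kr_shape k r) 0.

Definition node_strongly_stable (v : bst) (X : seq nat) : bool :=
  match v with
  | Nil => true
  | Node l _ r =>
      let Xv := [seq x <- X | x \in keys v] in
      sorted (fun a b => (a \in keys l) != (b \in keys l)) Xv
  end.

Definition is_inner (v : bst) : bool :=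
  match v with
  | Node Nil _ Nil => false
  | Node _ _ _ => true
  | Nil => false
  end.

Definition strongly_stable (T : bst) (X : seq nat) : bool :=
  all (fun x => x \in leaf_keys T) X &&
  all (fun v => is_inner v ==> node_strongly_stable v X) (subtrees T).

Definition repetitions_stable (T : bst) (X : seq nat) : Prop :=
  forall j, 0 < j -> strongly_stable T (flatten (nseq j X)).

Definition atomic (T : bst) (X : seq nat) : Prop :=
  X != [::] /\ repetitions_stable T X /\
  (forall Y, Y != [::] -> repetitions_stable T Y -> size X <= size Y).

Definition lg (x : R) : R := Rdiv (ln x) (ln (IZR 2)).

From Pilot Require Import Defs.
From Stdlib Require Import Reals Lra Classical.
From mathcomp Require Import all_boot zify.
From HB Require Import structures.
(* Defs' [Nil] and [number] are shadowed by all_boot; bring them back. *)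
Import Defs.

Set Implicit Arguments.
Unset Strict Implicit.
Unset Printing Implicit Defensive.

(* Let T be a full search tree keyed 1..n and X a sequence of leaf queries
   such that X and XX are strongly stable (all we use of atomicity).  At each
   inner node the queries then alternate between the two subtrees, equally
   often left and right, so with the balanced depth B(leaf) = 0,
   B(Node l r) = 1 + B(l)/2 + B(r)/2:
   - serving X without rotations costs |X| (B(T) + 1);
   - (Wilber) the transition point of an inner node v must be touched between
     two consecutive queries of X_v on opposite sides of v, and distinct inner
     nodes have distinct transition points, so any execution costs at least
     sum_v |X_v| / 4 = |X| B(T) / 4.
   Thus OPT = Theta(|X| B(T)) (opt_cost_bal_depth).  For the (k, 2^k)-tree and
   N = 2^k: B = Theta(N), lg n = Theta(N lg k), lg lg lg n = Theta(lg k). *)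

Lemma sorted_keys_node l x r :
  sorted ltn (keys (Node l x r)) ->
  [/\ sorted ltn (keys l), sorted ltn (keys r),
      (forall a, a \in keys l -> a < x) & (forall b, b \in keys r -> x < b)].
Proof.
rewrite /= sorted_cat_cons => /andP [Hl Hr].
have Hsl : sorted ltn (keys l) by move: Hl; rewrite -cats1 => /cat_sorted2 [].
split => //; first exact: path_sorted Hr.
- move=> a Ha; move: Hl; rewrite (sorted_pairwise ltn_trans) -cats1 pairwise_cat.
  by case/and3P => + _ _ => /allrelP /(_ a x Ha); rewrite mem_seq1 eqxx => /(_ isT).
- by move=> b; move: Hr; rewrite (path_sortedE ltn_trans) => /andP [/allP + _]; apply.
Qed.

Lemma subtree_atP t z : sorted ltn (keys t) -> z \in keys t ->
  exists l r, [/\ subtree_at z t = Node l z r, z \notin keys l & z \notin keys r].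
Proof.
elim: t => //= l IHl x r IHr Hs.
have [Hl Hr Hal Har] := sorted_keys_node Hs.
rewrite mem_cat in_cons => Hk.
case: (eqVneq z x) => [->|Hzx].
  by exists l, r; split => //; apply/negP; [move/Hal|move/Har]; rewrite ltnn.
case: ifP => Hlt.
  by apply: IHl => //; case/or3P: Hk => // [/eqP|/Har]; lia.
by apply: IHr => //; case/or3P: Hk => // [/Hal|/eqP]; lia.
Qed.

(* The shallowest node of t whose key lies in [lb, ub]: a top-down search
   going right below lb and left above ub meets it first. *)
Fixpoint top_in (t : bst) (lb ub : nat) : option nat :=
  match t with
  | Nil => None
  | Node l x r => if (lb <= x) && (x <= ub) then Some x
                  else if x < lb then top_in r lb ub else top_in l lb ub
  end.

Lemma top_in_range t lb ub z : top_in t lb ub = Some z -> lb <= z <= ub.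
Proof.
elim: t => //= l IHl x r IHr.
by case: ifP => [H [<-] //|_]; case: ifP => _; [exact: IHr|exact: IHl].
Qed.

Lemma top_in_mem t lb ub z : top_in t lb ub = Some z -> z \in keys t.
Proof.
elim: t => //= l IHl x r IHr; rewrite mem_cat in_cons.
case: ifP => [_ [->]|_]; first by rewrite eqxx orbT.
by case: ifP => _ H; [rewrite (IHr H) !orbT | rewrite (IHl H)].
Qed.

Lemma top_in_narrow t lb ub lb' ub' z : top_in t lb ub = Some z ->
  lb <= lb' -> ub' <= ub -> lb' <= z <= ub' -> top_in t lb' ub' = Some z.
Proof.
move=> + Hlb Hub Hz; elim: t => //= l IHl x r IHr.
case: ifP => [_ [->]|Hout]; first by rewrite Hz.
case: ifP => Hlt H.
  have -> : (lb' <= x) && (x <= ub') = false by lia.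
  have -> : x < lb' by lia.
  exact: IHr H.
have := top_in_range H => Hr.
have -> : (lb' <= x) && (x <= ub') = false by lia.
have -> : x < lb' = false by lia.
exact: IHl H.
Qed.

Lemma top_in_on_path t lb ub z x :
  top_in t lb ub = Some z -> lb <= x <= ub -> z \in path_keys t x.
Proof.
move=> + Hx; elim: t => //= l IHl y r IHr.
case: ifP => [_ [->]|Hout]; first by rewrite in_cons eqxx.
case: ifP => Hlt H; rewrite in_cons; apply/orP; right.
  have -> : (x == y) = false by lia.
  have -> : x < y = false by lia.
  exact: IHr.
have := top_in_range H => Hr.
have -> : (x == y) = false by lia.
have -> : x < y by lia.
exact: IHl.
Qed.

Lemma top_in_exists t lb ub x : sorted ltn (keys t) -> x \in keys t ->
  lb <= x <= ub -> exists z, top_in t lb ub = Some z.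
Proof.
move=> + + Hx; elim: t => //= l IHl y r IHr Hs.
have [Hl Hr Hal Har] := sorted_keys_node Hs.
rewrite mem_cat in_cons => Hk.
case: ifP => [_|Hout]; first by eauto.
case: ifP => Hlt.
  by apply: IHr => //; case/or3P: Hk => [/Hal|/eqP|] //; lia.
by apply: IHl => //; case/or3P: Hk => [|/eqP|/Har] //; lia.
Qed.

Definition endpoint_of (a p : nat) (o : option nat) : bool :=
  if o is Some u then (u == a) || (u == p) else false.

Lemma rot_up_spec a t t' : rot_up a t = Some t' ->
  exists2 p, parent_of a t = Some p &
  keys t' = keys t /\ forall lb ub, top_in t' lb ub = top_in t lb ub \/
    (endpoint_of a p (top_in t lb ub) /\ endpoint_of a p (top_in t' lb ub)).
Proof.
elim: t t' => //= l IHl x r IHr t'.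
case: (eqVneq a x) => // Hax.
case: ifP => Hlt.
  case: l IHl => // ll y lr IHl.
  case: (eqVneq a y) => Hay.
    move=> [<-]; subst y; exists x => //; split; first by rewrite /= -catA.
    move=> lb ub /=; do ! case: ifP => /=; rewrite ?eqxx ?orbT;
      move=> *; try (by left); try (by right); lia.
  case Hr: (rot_up a (Node ll y lr)) => [l0|] //= [<-].
  have [p Hp [Hk Htop]] := IHl _ Hr.
  exists p => //; split; first by rewrite /= Hk.
  move=> lb ub /=; case: ifP => _; first by left.
  by case: ifP => _; [left|exact: Htop].
case: r IHr => // rl y rr IHr.
case: (eqVneq a y) => Hay.
  move=> [<-]; subst y; exists x => //; split; first by rewrite /= -catA.
  move=> lb ub /=; do ! case: ifP => /=; rewrite ?eqxx ?orbT;
    move=> *; try (by left); try (by right); lia.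
case Hr: (rot_up a (Node rl y rr)) => [r0|] //= [<-].
have [p Hp [Hk Htop]] := IHr _ Hr.
exists p => //; split; first by rewrite /= Hk.
move=> lb ub /=; case: ifP => _; first by left.
by case: ifP => _; [exact: Htop|left].
Qed.

Lemma run_rots_keys rs t t' E : run_rots rs t = Some (t', E) -> keys t' = keys t.
Proof.
elim: rs t t' E => [|a rs IH] t t' E /=; first by case=> ->.
case Hr: (rot_up a t) => [t1|] //; case: (parent_of a t) => [p|] //.
case Hrr: (run_rots rs t1) => [[t2 E2]|] //= [<- _].
have [p0 _ [Hk _]] := rot_up_spec Hr.
by rewrite (IH _ _ _ Hrr) Hk.
Qed.

(* Wilber's transition point of the key range [lb, ub] split at y (left half
   [lb, y-1], right half [y, ub]): the shallowest node of the half that does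
   not contain the shallowest node of the whole range. *)
Definition transition_point (lb y ub : nat) (t : bst) : option nat :=
  match top_in t lb ub with
  | Some j => if j < y then top_in t y ub else top_in t lb y.-1
  | None => None
  end.

Definition half_lo (lb y : nat) (z : nat) : nat := if z < y then lb else y.
Definition half_hi (y ub : nat) (z : nat) : nat := if z < y then y.-1 else ub.

Lemma transition_pointP lb y ub t z : lb < y <= ub ->
  transition_point lb y ub t = Some z <->
  exists2 v, top_in t lb ub = Some v &
    (v < y) != (z < y) /\ top_in t (half_lo lb y z) (half_hi y ub z) = Some z.
Proof.
rewrite /transition_point /half_lo /half_hi => Hy; split.
  case: (top_in t lb ub) => [v|] //; case: ifP => Hv Hz; exists v => //;
    have Hzr := top_in_range Hz.
    have Hzy : (z < y) = false by lia.
    by rewrite Hzy Hv.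
  have Hzy : z < y by lia.
  by rewrite Hzy Hv.
case=> v -> [Hside]; case: ifP Hside => Hz; case: ifP => //= Hv _ <-.
Qed.

Lemma transition_point_range lb y ub t z : lb < y <= ub ->
  transition_point lb y ub t = Some z -> lb <= z <= ub.
Proof.
move=> Hy /(transition_pointP _ _ Hy) [v _ [_ /top_in_range]].
by rewrite /half_lo /half_hi; case: ifP; lia.
Qed.

Lemma transition_point_mem lb y ub t z : lb < y <= ub ->
  transition_point lb y ub t = Some z -> z \in keys t.
Proof. by move=> Hy /(transition_pointP _ _ Hy) [v _ [_ /top_in_mem]]. Qed.

Lemma transition_point_exists lb y ub t a b : sorted ltn (keys t) ->
  a \in keys t -> lb <= a < y -> b \in keys t -> y <= b <= ub ->
  exists z, transition_point lb y ub t = Some z.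
Proof.
move=> Hs Ha Hay Hb Hby.
have [j Ej] := top_in_exists (lb := lb) (ub := ub) Hs Ha ltac:(lia).
rewrite /transition_point Ej; case: ifP => _.
  exact: top_in_exists Hs Hb Hby.
by apply: top_in_exists Hs Ha _; lia.
Qed.

Lemma rot_up_transition_point lb y ub t t' a p z : lb < y <= ub ->
  (forall lb ub, top_in t' lb ub = top_in t lb ub \/
     (endpoint_of a p (top_in t lb ub) /\ endpoint_of a p (top_in t' lb ub))) ->
  transition_point lb y ub t = Some z -> ~~ endpoint_of a p (Some z) ->
  transition_point lb y ub t' = Some z.
Proof.
move=> Hy Hrot /(transition_pointP _ _ Hy) [v Ev [Hside Hhalf]] Hz.
apply/(transition_pointP _ _ Hy).
set lb' := half_lo lb y z; set ub' := half_hi y ub z.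
have Hhalf' : top_in t' lb' ub' = Some z.
  by case: (Hrot lb' ub') => [->//|[]]; rewrite Hhalf (negbTE Hz).
have [v' Ev' Hv'] : exists2 v', top_in t' lb ub = Some v' & v' != z.
  case: (Hrot lb ub) => [->|[_]]; first by exists v => //; apply: contraNneq Hside => ->.
  case: (top_in t' lb ub) => [v'|] // Hv'; exists v' => //.
  by apply: contraNneq Hz => <-.
exists v' => //; split => //; apply: contraNneq Hv' => Hs.
have Hz' := top_in_range Hhalf; have Hv'r := top_in_range Ev'.
suff : top_in t' lb' ub' = Some v' by rewrite Hhalf' => -[->].
move: Hz'; rewrite /lb' /ub' /half_lo /half_hi.
by case: ifP Hs => Hzy Hs Hz'; apply: (top_in_narrow Ev'); lia.
Qed.

Lemma run_rots_transition_point lb y ub rs t t' E z : lb < y <= ub ->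
  run_rots rs t = Some (t', E) -> transition_point lb y ub t = Some z ->
  z \notin E -> transition_point lb y ub t' = Some z.
Proof.
move=> Hy; elim: rs t t' E => [|a rs IH] t t' E /=; first by case=> -> _ ->.
case Hr: (rot_up a t) => [t1|] //; case Hp: (parent_of a t) => [p|] //.
case Hrr: (run_rots rs t1) => [[t2 E2]|] //= [<- <-] Ht.
rewrite !in_cons !negb_or => /and3P [Ha Hpz HE].
have [p0 Hp0 [_ Htop]] := rot_up_spec Hr.
rewrite Hp in Hp0; case: Hp0 => Ep; subst p0.
apply: (IH _ _ _ Hrr _ HE); apply: (rot_up_transition_point Hy Htop Ht).
by rewrite /= negb_or Ha Hpz.
Qed.

Definition touched (t : bst) (x : nat) (E : seq nat) (z : nat) : bool :=
  (z \in path_keys t x) || in_span t E z.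

Lemma endpoint_in_span t E z :
  sorted ltn (keys t) -> z \in keys t -> z \in E -> in_span t E z.
Proof.
move=> Hs Hk HE; rewrite /in_span.
have [l [r [-> H1 H2]]] := subtree_atP Hs Hk.
apply/and3P; split.
- by apply/hasP; exists z => //=; rewrite mem_cat in_cons eqxx orbT.
- by apply/negP => /allP /(_ z HE); rewrite (negbTE H1).
- by apply/negP => /allP /(_ z HE); rewrite (negbTE H2).
Qed.

Lemma untouched_transition_point lb y ub t x rs t' E z :
  sorted ltn (keys t) -> lb < y <= ub -> run_rots rs t = Some (t', E) ->
  transition_point lb y ub t = Some z -> ~~ touched t x E z ->
  transition_point lb y ub t' = Some z /\ (lb <= x <= ub -> (z < y) != (x < y)).
Proof.
move=> Hs Hy Hrun Hz; rewrite /touched negb_or => /andP [Hpath Hspan]; split.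
  apply: (run_rots_transition_point Hy Hrun Hz); apply: contraNN Hspan.
  exact: endpoint_in_span Hs (transition_point_mem Hy Hz).
move=> Hx; apply: contraNN Hpath => /eqP Hside.
have [v _ [_ Hhalf]] := (transition_pointP _ _ Hy).1 Hz.
have Hzr := top_in_range Hhalf; apply: (top_in_on_path Hhalf); move: Hzr.
by rewrite /half_lo /half_hi; case: ifP Hside => Hzy Hside; lia.
Qed.

Definition tp_hit lb y ub t x E : bool :=
  if transition_point lb y ub t is Some z then touched t x E z else false.

Fixpoint tp_hits (lb y ub : nat) (t : bst) (X : seq nat) (R : seq (seq nat)) : nat :=
  match X, R with
  | x :: X', rs :: R' =>
      match run_rots rs t with
      | Some (t', E) => tp_hit lb y ub t x E + tp_hits lb y ub t' X' R'
      | None => 0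
      end
  | _, _ => 0
  end.

Fixpoint alternations (lb y ub : nat) (s : option bool) (X : seq nat) : nat :=
  match X with
  | [::] => 0
  | x :: X' =>
      if (lb <= x <= ub) then
        (if s is Some b then b != (x < y) else false) +
        alternations lb y ub (Some (x < y)) X'
      else alternations lb y ub s X'
  end.

Definition tp_opposite lb y ub t (s : option bool) : Prop :=
  exists2 z, transition_point lb y ub t = Some z &
    forall b, s = Some b -> b != (z < y).

(* Wilber's interleave argument for one range: between two consecutive
   queries on opposite sides the transition point must be touched, so every
   touch pays for at most two alternations.  The flag f records that the
   transition point is untouched since the last query s in the range, hence
   lies on the other side; otherwise one alternation is allowed for free. *)
Lemma alternations_le_hits lb y ub a b X : lb < y <= ub ->
  forall t R c s (f : bool), sorted ltn (keys t) ->
  a \in keys t -> lb <= a < y -> b \in keys t -> y <= b <= ub ->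
  serve t X R = Some c -> (f -> tp_opposite lb y ub t s) ->
  alternations lb y ub s X <= 2 * tp_hits lb y ub t X R + ~~ f.
Proof.
move=> Hy; elim: X => [|x X IH] t [|rs R] c s f //= Hs Ha Hay Hb Hby.
case Hrun: (run_rots rs t) => [[t' E]|] //.
case Hserve: (serve t' X R) => [c'|] //= _ Hf.
have Hk := run_rots_keys Hrun.
have Hrest s' (f' : bool) : (f' -> tp_opposite lb y ub t' s') ->
    alternations lb y ub s' X <= 2 * tp_hits lb y ub t' X R + ~~ f'.
  by apply: IH Hserve; rewrite ?Hk.
have [z Hz] := transition_point_exists Hs Ha Hay Hb Hby.
rewrite /tp_hit Hz.
have [Hhit|Hmiss] := boolP (touched t x E z).
  (* a touch pays for the alternation at x, and resets the flag *)
  case: ifP => Hx; last by have := Hrest s false (fun H => ltac:(done)); lia.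
  have := Hrest (Some (x < y)) false (fun H => ltac:(done)).
  by case: s {Hf} => [bb|] /=; [case: (bb != _)|]; lia.
(* no touch: the transition point stays, opposite to x if x is in range *)
have [Hz' Hside] := untouched_transition_point Hs Hy Hrun Hz Hmiss.
rewrite add0n; case: ifP => Hx; last first.
  by apply: Hrest => /Hf [z0]; rewrite Hz => -[<-] Hopp; exists z.
have Hopp : tp_opposite lb y ub t' (Some (x < y)).
  by exists z => // bb [<-]; rewrite eq_sym Hside.
have := Hrest _ true (fun _ => Hopp); case: s Hf => [bb|] Hf /=; last by lia.
case: f Hf => Hf /=; last by case: (bb != _); lia.
(* with the flag set, x is on the side of the previous query: no alternation *)
have [z0 Hz0 Hbb] := Hf isT; move: Hz0 (Hbb bb erefl) (Hside Hx); rewrite Hz => -[<-].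
by clear Hf Hbb; case: bb; case: (z < y); case: (x < y) => //=; lia.
Qed.

(* A key range [lo, hi] split at mid into [lo, mid - 1] and [mid, hi]. *)
Record range := Range { lo : nat; mid : nat; hi : nat }.

Definition range_eq_dec (r1 r2 : range) : {r1 = r2} + {r1 <> r2}.
Proof. decide equality; exact: PeanoNat.Nat.eq_dec. Defined.
HB.instance Definition _ := hasDecEq.Build range (compareP range_eq_dec).

Definition valid_range (rg : range) : bool := lo rg < mid rg <= hi rg.

Definition laminar (r1 r2 : range) : bool :=
  let: Range l1 y1 u1 := r1 in let: Range l2 y2 u2 := r2 in
  [|| u1 < l2, u2 < l1,
      [&& l1 <= l2, u2 <= u1 & (u2 < y1) || (y1 <= l2)] |
      [&& l2 <= l1, u1 <= u2 & (u1 < y2) || (y2 <= l1)]].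

Definition range_tp (rg : range) (t : bst) : option nat :=
  transition_point (lo rg) (mid rg) (hi rg) t.

(* A range inside a half of another one has a different transition point:
   the transition point of the outer range is the shallowest node of the
   inner one, which is never the inner transition point. *)
Lemma transition_point_nested l1 y1 u1 l2 y2 u2 t z :
  l1 < y1 <= u1 -> l2 < y2 <= u2 -> l1 <= l2 -> u2 <= u1 ->
  (u2 < y1) || (y1 <= l2) ->
  transition_point l1 y1 u1 t = Some z -> transition_point l2 y2 u2 t = Some z ->
  False.
Proof.
move=> H1 H2 Hl Hu Hhalf /(transition_pointP _ _ H1) [v1 _ [_ Htop1]] Htp2.
have [v2 Ev2 [Hside _]] := (transition_pointP _ _ H2).1 Htp2.
have Hz2 := transition_point_range H2 Htp2; have Hz1 := top_in_range Htop1.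
have : top_in t l2 u2 = Some z.
  by apply: (top_in_narrow Htop1); move: Hz1; rewrite /half_lo /half_hi; case: ifP; lia.
by rewrite Ev2 => -[Hv]; rewrite Hv eqxx in Hside.
Qed.

Lemma laminar_transition_points r1 r2 t z :
  laminar r1 r2 -> valid_range r1 -> valid_range r2 ->
  range_tp r1 t = Some z -> range_tp r2 t = Some z -> False.
Proof.
case: r1 r2 => [l1 y1 u1] [l2 y2 u2]; rewrite /valid_range /range_tp /=.
move=> Hlam H1 H2 T1 T2.
have := transition_point_range H1 T1; have := transition_point_range H2 T2.
case/or4P: Hlam => [||/and3P [Hl Hu Hh]|/and3P [Hl Hu Hh]]; try lia.
- by move=> _ _; apply: (transition_point_nested H1 H2 Hl Hu Hh T1 T2).
- by move=> _ _; apply: (transition_point_nested H2 H1 Hl Hu Hh T2 T1).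
Qed.

Lemma range_tps_uniq s t : pairwise laminar s -> all valid_range s ->
  uniq (pmap (range_tp^~ t) s).
Proof.
elim: s => //= r s IH /andP [Hr Hp] /andP [Hv Hva].
case E: (range_tp r t) => [z|] /=; last exact: IH.
rewrite IH // andbT mem_pmap; apply/negP => /mapP [r2 Hr2 E2].
exact: (laminar_transition_points (allP Hr r2 Hr2) Hv (allP Hva r2 Hr2) E).
Qed.

(* At one step, the touched transition points of pairwise laminar ranges are
   distinct touched nodes, hence at most the cost of the step. *)
Lemma hits_le_step_cost s t x E : pairwise laminar s -> all valid_range s ->
  \sum_(rg <- s) (tp_hit (lo rg) (mid rg) (hi rg) t x E : nat) <= step_cost t x E.
Proof.
move=> Hp Hv.
have -> : \sum_(rg <- s) (tp_hit (lo rg) (mid rg) (hi rg) t x E : nat) =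
          count (touched t x E) (pmap (range_tp^~ t) s).
  elim: (s) => [|r s' IH]; first by rewrite big_nil.
  by rewrite big_cons IH /tp_hit /= /range_tp; case: (transition_point _ _ _ t).
rewrite /step_cost -!size_filter; apply: uniq_leq_size.
  exact/filter_uniq/range_tps_uniq.
move=> z; rewrite !mem_filter /touched => /andP [-> Hz] /=.
move: Hz; rewrite mem_pmap => /mapP [r /(allP Hv) Hr E2].
exact: (transition_point_mem Hr (esym E2)).
Qed.

Lemma hits_le_cost s X t R c : pairwise laminar s -> all valid_range s ->
  serve t X R = Some c -> \sum_(rg <- s) tp_hits (lo rg) (mid rg) (hi rg) t X R <= c.
Proof.
move=> Hp Hv; elim: X t R c => [|x X IH] t [|rs R] c //=.
  by move=> _; rewrite big1.
case Hrun: (run_rots rs t) => [[t' E]|] //.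
case Hs: (serve t' X R) => [c'|] //= [<-].
rewrite big_split /=; apply: leq_add; last exact: IH Hs.
exact: hits_le_step_cost.
Qed.

Definition bst_eq_dec (t1 t2 : bst) : {t1 = t2} + {t1 <> t2}.
Proof. decide equality; exact: PeanoNat.Nat.eq_dec. Defined.
HB.instance Definition _ := hasDecEq.Build bst (compareP bst_eq_dec).

Lemma size_number s o : bst_size (number s o) = bst_size s.
Proof. by elim: s o => //= l IHl x r IHr o; rewrite IHl IHr. Qed.

Lemma keys_number s o : keys (number s o) = iota o.+1 (bst_size s).
Proof.
elim: s o => //= l IHl x r IHr o.
rewrite IHl IHr !iotaD -catA /=; congr (_ ++ _).
by f_equal; [lia|f_equal; lia].
Qed.

Lemma subtrees_number s o v :
  v \in subtrees (number s o) -> exists s' o', v = number s' o'.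
Proof.
elim: s o => //= l IHl x r IHr o; rewrite in_cons mem_cat => /or3P [/eqP ->||].
- by exists (Node l x r), o.
- exact: IHl.
- exact: IHr.
Qed.

Definition node_range (v : bst) : range :=
  if v is Node l y r then Range (y - bst_size l) y (y + bst_size r)
  else Range 0 0 0.

Lemma node_range_bounds s o v : v \in subtrees (number s o) ->
  [/\ o < lo (node_range v), hi (node_range v) <= o + bst_size s &
      lo (node_range v) <= mid (node_range v) <= hi (node_range v)].
Proof.
elim: s o => //= l IHl x r IHr o; rewrite in_cons mem_cat => /or3P [/eqP ->|H|H] /=.
- by rewrite !size_number; split; lia.
- by have [H1 H2 H3] := IHl _ H; split => //; lia.
- by have [H1 H2 H3] := IHr _ H; split => //; lia.
Qed.

(* Node ranges of a numbered tree are laminar: the ranges of a left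
   (right) subtree lie in the lower (upper) half of the root range. *)
Lemma laminar_node_ranges s o :
  pairwise laminar [seq node_range v | v <- subtrees (number s o)].
Proof.
elim: s o => //= l IHl x r IHr o.
rewrite map_cat pairwise_cat IHl IHr !andbT; apply/andP; split.
  rewrite all_cat; apply/andP; split; apply/allP => rg /mapP [v Hv ->];
    have [H1 H2 H3] := node_range_bounds Hv; move: H1 H2 H3;
    case: (node_range v) => a b c /=; rewrite ?size_number; lia.
apply/allrelP => r1 r2 /mapP [v1 Hv1 ->] /mapP [v2 Hv2 ->].
have [H1 H2 H3] := node_range_bounds Hv1; have [H1' H2' H3'] := node_range_bounds Hv2.
move: H1 H2 H3 H1' H2' H3'; case: (node_range v1) => a b c; case: (node_range v2) => a' b' c' /=.
rewrite ?size_number; lia.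
Qed.

Fixpoint full (t : bst) : bool :=
  match t with
  | Nil => false
  | Node Nil _ Nil => true
  | Node l _ r => full l && full r
  end.

Lemma fullE l x r :
  full (Node l x r) = ((l == Nil) && (r == Nil)) || (full l && full r).
Proof. by case: l => [|? ? ?]; case: r => [|? ? ?]. Qed.

Lemma full_node l x r : full l -> full r -> full (Node l x r).
Proof. by rewrite fullE => -> ->; rewrite orbT. Qed.

Lemma full_number s o : full (number s o) = full s.
Proof.
elim: s o => // l IHl x r IHr o; rewrite !fullE IHl IHr.
by case: l {IHl}; case: r {IHr}.
Qed.

Lemma full_subtrees t v : full t -> v \in subtrees t -> full v.
Proof.
elim: t => // l IHl x r IHr Hf; rewrite in_cons mem_cat => /or3P [/eqP -> //|H|H].
  move: Hf H; rewrite fullE; case: l IHl => // ? ? ? IHl /orP [/andP [/eqP //]|/andP [Hl _]].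
  exact: IHl.
move: Hf H; rewrite fullE andbC; case: r IHr => // ? ? ? IHr /orP [/andP [/eqP //]|/andP [_ Hr]].
exact: IHr.
Qed.

Lemma is_inner_number s o : is_inner (number s o) = is_inner s.
Proof. by case: s => [|[|? ? ?] x [|? ? ?]]. Qed.

Definition inner_ranges (T : bst) : seq range :=
  [seq node_range v | v <- subtrees T & is_inner v].

Lemma inner_ranges_laminar s : pairwise laminar (inner_ranges (number s 0)).
Proof.
rewrite /inner_ranges pairwise_map; apply: pairwise_filter.
by rewrite -pairwise_map; exact: laminar_node_ranges.
Qed.

Lemma numbered_inner_node s w : full s -> w \in subtrees (number s 0) ->
  is_inner w -> exists l y r, [/\ w = Node l y r, valid_range (node_range w),
    forall z, (z \in keys w) = (lo (node_range w) <= z <= hi (node_range w)) &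
    forall z, z \in keys w -> (z \in keys l) = (z < y)].
Proof.
move=> Hf Hw Hi.
have Hfw : full w by apply: full_subtrees Hw; rewrite full_number.
have [s' [o' Ew]] := subtrees_number Hw; subst w; clear Hw.
rewrite full_number in Hfw; rewrite is_inner_number in Hi.
case: s' Hi Hfw => [|sl a sr] // Hi Hfw.
have Hsz : 0 < bst_size sl /\ 0 < bst_size sr.
  by case: sl sr Hi Hfw => [|? ? ?] [|? ? ?] //= _; rewrite ?andbF //; lia.
exists (number sl o'), (o' + bst_size sl + 1), (number sr (o' + bst_size sl + 1)).
split => //= [|z|z]; rewrite ?size_number.
- rewrite /valid_range /=; lia.
- by rewrite mem_cat in_cons !keys_number !mem_iota; lia.
- by rewrite mem_cat in_cons !keys_number !mem_iota; lia.
Qed.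

Lemma inner_ranges_valid s : full s -> all valid_range (inner_ranges (number s 0)).
Proof.
move=> Hf; apply/allP => rg /mapP [v]; rewrite mem_filter => /andP [Hi Hv] ->.
by have [l [y [r [_ Hval _ _]]]] := numbered_inner_node Hf Hv Hi.
Qed.

Lemma alternating_path (T : Type) (P : pred T) x s :
  path (fun a b => P a != P b) x s ->
  if P (last x s) == P x then
    (if P x then count P (x :: s) = (count (predC P) (x :: s)).+1
     else count (predC P) (x :: s) = (count P (x :: s)).+1)
  else count P (x :: s) = count (predC P) (x :: s).
Proof.
elim: s x => [|y s IH] x /=; first by case: (P x).
move=> /andP [Hxy Hp]; have := IH y Hp; move: Hxy; rewrite /=.
by case: (P x); case: (P y) => //= _; case: (P (last y s)) => //=; lia.
Qed.

Lemma alternating_twice_balanced (T : Type) (P : pred T) s :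
  sorted (fun a b => P a != P b) (s ++ s) -> count P s = count (predC P) s.
Proof.
case: s => //= x s; rewrite cat_path => /andP [Hp /= /andP [Hl _]].
by have := alternating_path Hp; rewrite (negbTE Hl).
Qed.

Lemma leaf_keys_inner l x r : is_inner (Node l x r) ->
  leaf_keys (Node l x r) = leaf_keys l ++ leaf_keys r.
Proof. by case: l => [|? ? ?]; case: r => [|? ? ?]. Qed.

Lemma leaf_keys_sub t : {subset leaf_keys t <= keys t}.
Proof.
elim: t => // l IHl x r IHr z.
case Hi: (is_inner (Node l x r)).
  rewrite leaf_keys_inner // mem_cat => /orP [/IHl|/IHr] H;
  by rewrite /= mem_cat in_cons H ?orbT.
by case: l r Hi {IHl IHr} => [|? ? ?] [|? ? ?] //= _; rewrite !in_cons.
Qed.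

Lemma keys_subtrees t w : w \in subtrees t -> {subset keys w <= keys t}.
Proof.
elim: t => //= l IHl x r IHr; rewrite in_cons mem_cat.
case/or3P => [/eqP ->//|H|H] z Hz; rewrite mem_cat in_cons.
  by rewrite (IHl H z Hz).
by rewrite (IHr H z Hz) !orbT.
Qed.

(* The balanced depth: the average number of inner nodes on the search path
   of a query when every inner node sends half of its queries to each side. *)
Fixpoint bal_depth (t : bst) : R :=
  match t with
  | Nil => R0
  | Node l _ r =>
      if is_inner t then Rplus (Rplus R1 (Rdiv (bal_depth l) 2)) (Rdiv (bal_depth r) 2)
      else R0
  end.

Lemma bal_depth_inner l x r : is_inner (Node l x r) ->
  bal_depth (Node l x r) =
  Rplus (Rplus R1 (Rdiv (bal_depth l) 2)) (Rdiv (bal_depth r) 2).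
Proof. by case: l => [|? ? ?]; case: r => [|? ? ?]. Qed.

Definition balanced (t : bst) (Y : seq nat) : Prop :=
  all (fun z => z \in leaf_keys t) Y /\
  forall l x r, Node l x r \in subtrees t -> is_inner (Node l x r) ->
    count (fun z => z \in keys l) [seq z <- Y | z \in keys (Node l x r)] =
    count (predC (fun z => z \in keys l)) [seq z <- Y | z \in keys (Node l x r)].

Lemma filter_subtree t w (P : pred nat) Y : w \in subtrees t ->
  {subset keys t <= P} ->
  [seq z <- [seq z <- Y | P z] | z \in keys w] = [seq z <- Y | z \in keys w].
Proof.
move=> Hw HP; rewrite -filter_predI; apply: eq_filter => z /=.
by case E: (z \in keys w) => //=; apply: HP (keys_subtrees Hw E).
Qed.

Lemma balanced_children l x r Y : sorted ltn (keys (Node l x r)) ->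
  is_inner (Node l x r) -> balanced (Node l x r) Y ->
  [/\ balanced l [seq z <- Y | z \in keys l],
      balanced r [seq z <- Y | z \notin keys l],
      size [seq z <- Y | z \in keys l] = size [seq z <- Y | z \notin keys l],
      size [seq z <- Y | z \in keys l] + size [seq z <- Y | z \notin keys l] = size Y &
      forall z, z \in Y -> (z \in keys l) = (z < x) /\ z != x].
Proof.
move=> Hs Hi [HY Hbal].
have [_ _ Hal Har] := sorted_keys_node Hs.
have Hside z : z \in Y -> [/\ (z \in keys l) = (z < x), z != x &
    if z \in keys l then z \in leaf_keys l else z \in leaf_keys r].
  move/(allP HY); rewrite leaf_keys_inner // mem_cat => /orP [] Hz;
    have Hk := leaf_keys_sub Hz.
    by have := Hal z Hk; rewrite Hk; split => //; lia.
  have Hnl : (z \in keys l) = false by apply/negP => /Hal; have := Har z Hk; lia.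
  by have := Har z Hk; rewrite Hnl; split => //; lia.
have HYall : [seq z <- Y | z \in keys (Node l x r)] = Y.
  by apply/all_filterP/allP => z /(allP HY) /leaf_keys_sub.
have Hroot := Hbal l x r (mem_head _ _) Hi; rewrite HYall in Hroot.
have Hnode w : w \in subtrees l ++ subtrees r -> w \in subtrees (Node l x r).
  by rewrite /= in_cons => ->; rewrite orbT.
split.
- split.
    by apply/allP => z; rewrite mem_filter => /andP [Hl /Hside [_ _]]; rewrite Hl.
  move=> l' x' r' Hw Hi'; rewrite (filter_subtree _ Hw) //.
  by apply: Hbal Hi'; apply: Hnode; rewrite mem_cat Hw.
- split.
    by apply/allP => z; rewrite mem_filter => /andP [/negbTE Hl /Hside [_ _]]; rewrite Hl.
  move=> l' x' r' Hw Hi'; rewrite (filter_subtree _ Hw) => [|z Hz].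
    by apply: Hbal Hi'; apply: Hnode; rewrite mem_cat Hw orbT.
  by apply/negP => /Hal; have := Har z Hz; lia.
- by rewrite !size_filter.
- by rewrite !size_filter; apply: count_predC.
- by move=> z /Hside [].
Qed.

Lemma inner_load_sum t Y : sorted ltn (keys t) -> balanced t Y ->
  INR (\sum_(w <- subtrees t | is_inner w) size [seq z <- Y | z \in keys w]) =
  Rmult (INR (size Y)) (bal_depth t).
Proof.
elim: t Y => [|l IHl x r IHr] Y Hs HY; first by rewrite big_nil /=; ring.
case Hi: (is_inner (Node l x r)); last first.
  by case: l r Hi {IHl IHr Hs HY} => [|? ? ?] [|? ? ?] //= _; rewrite big_cons big_nil /=; ring.
have [Hsl Hsr Hal Har] := sorted_keys_node Hs.
have [Hbl Hbr Heq Hsum Hside] := balanced_children Hs Hi HY.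
have Hrestrict (t' : bst) (P : pred nat) : {subset keys t' <= P} ->
    \sum_(w <- subtrees t' | is_inner w) size [seq z <- Y | z \in keys w] =
    \sum_(w <- subtrees t' | is_inner w) size [seq z <- [seq z <- Y | P z] | z \in keys w].
  move=> HP; rewrite big_seq_cond [RHS]big_seq_cond.
  by apply: eq_bigr => w /andP [Hw _]; rewrite (filter_subtree _ Hw).
have Hroot : [seq z <- Y | z \in keys (Node l x r)] = Y.
  by apply/all_filterP/allP => z /(allP (proj1 HY)) /leaf_keys_sub.
rewrite (bal_depth_inner Hi) [subtrees _]/= big_cons Hi Hroot big_cat /= !plus_INR.
rewrite (Hrestrict l (fun z => z \in keys l)) // IHl //.
rewrite (Hrestrict r (fun z => z \notin keys l)) ?IHr // => [|z Hz].
  by rewrite -Hsum plus_INR Heq; set a := INR _; field.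
by apply/negP => /Hal; have := Har z Hz; lia.
Qed.

Lemma path_length_sum t Y : sorted ltn (keys t) -> balanced t Y ->
  INR (\sum_(z <- Y) size (path_keys t z)) =
  Rmult (INR (size Y)) (Rplus (bal_depth t) R1).
Proof.
elim: t Y => [|l IHl x r IHr] Y Hs HY.
  by case: Y HY => [|y Y] [] // _ _; rewrite big_nil /=; ring.
case Hi: (is_inner (Node l x r)); last first.
  case: l r Hi {IHl IHr Hs} HY => [|? ? ?] [|? ? ?] //= _ [HY _].
  rewrite (eq_big_seq (fun _ => 1)) => [|z /(allP HY)]; last first.
    by rewrite mem_seq1 => /eqP -> /=; rewrite eqxx.
  by rewrite sum1_size /=; ring.
have [Hbl Hbr Heq Hsum Hside] := balanced_children Hs Hi HY.
have [Hsl Hsr _ _] := sorted_keys_node Hs.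
rewrite (bal_depth_inner Hi) (bigID (fun z => z \in keys l)) /= -(big_filter Y (fun z => z \in keys l)).
rewrite -(big_filter Y (fun z => z \notin keys l)).
rewrite (eq_big_seq (fun z => 1 + size (path_keys l z))) => [|z]; last first.
  by rewrite mem_filter => /andP [Hl /Hside [Hlt Hne]] /=; rewrite (negbTE Hne) -Hlt Hl.
rewrite [X in _ + X](eq_big_seq (fun z => 1 + size (path_keys r z))) => [|z]; last first.
  by rewrite mem_filter => /andP [/negbTE Hl /Hside [Hlt Hne]] /=; rewrite (negbTE Hne) -Hlt Hl.
rewrite !big_split /= !sum1_size !plus_INR IHl // IHr //.
by rewrite -Hsum plus_INR Heq; set a := INR _; field.
Qed.

Lemma alternations_filter lb y ub s X :
  alternations lb y ub s X = alternations lb y ub s [seq x <- X | lb <= x <= ub].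
Proof. by elim: X s => //= x X IH s; case: ifP => H /=; rewrite ?H IH. Qed.

Lemma alternations_path lb y ub x0 Z :
  path (fun a b => (a < y) != (b < y)) x0 Z -> all (fun x => lb <= x <= ub) Z ->
  alternations lb y ub (Some (x0 < y)) Z = size Z.
Proof.
elim: Z x0 => //= z Z IH x0 /andP [H1 H2] /andP [H3 H4].
by rewrite H3 H1 (IH z H2 H4).
Qed.

Lemma size_le_alternations lb y ub Z : all (fun x => lb <= x <= ub) Z ->
  sorted (fun a b => (a < y) != (b < y)) Z ->
  count (fun a => a < y) Z = count (predC (fun a => a < y)) Z ->
  size Z <= 2 * alternations lb y ub None Z.
Proof.
case: Z => //= z Z /andP [Hz HZ] Hp Hc.
rewrite Hz add0n (alternations_path Hp HZ).
case: Z {Hp HZ} Hc => //=; first by case: (z < y).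
by move=> *; lia.
Qed.

Lemma node_load_le_hits S X R c w : full S -> w \in subtrees (number S 0) ->
  is_inner w -> node_strongly_stable w X -> node_strongly_stable w (X ++ X) ->
  serve (number S 0) X R = Some c ->
  size [seq z <- X | z \in keys w] <=
  4 * tp_hits (lo (node_range w)) (mid (node_range w)) (hi (node_range w)) (number S 0) X R.
Proof.
move=> Hf Hw Hi Hs1 Hs2 Hserve.
have [l [y [r [Ew Hval Hkeys Hleft]]]] := numbered_inner_node Hf Hw Hi.
have Hy : mid (node_range w) = y by rewrite Ew.
move: Hval Hkeys; rewrite Hy; set lb := lo _; set ub := hi _ => Hval Hkeys.
rewrite /valid_range Hy in Hval.
set Xw := [seq z <- X | z \in keys w].
have HXw : all (fun z => z \in keys w) Xw by apply: filter_all.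
have Hside : {in keys w &, (fun a b => (a \in keys l) != (b \in keys l)) =2
                           (fun a b => (a < y) != (b < y))}.
  by move=> a b Ha Hb /=; rewrite !Hleft.
have Halt : sorted (fun a b => (a < y) != (b < y)) Xw.
  by move: Hs1; rewrite Ew /node_strongly_stable -Ew -/Xw (eq_in_sorted Hside).
have Hbal : count (fun a => a < y) Xw = count (predC (fun a => a < y)) Xw.
  move: Hs2; rewrite Ew /node_strongly_stable -Ew filter_cat -/Xw.
  rewrite (eq_in_sorted Hside) ?all_cat ?HXw //.
  exact: alternating_twice_balanced.
have Hsize : size Xw <= 2 * alternations lb y ub None X.
  rewrite alternations_filter -(eq_filter Hkeys) -/Xw.
  by apply: size_le_alternations => //; apply/allP => z /(allP HXw); rewrite Hkeys.
have HT : sorted ltn (keys (number S 0)) by rewrite keys_number; exact: iota_ltn_sorted.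
have Hmem z : lb <= z <= ub -> z \in keys (number S 0).
  by rewrite -Hkeys => Hz; apply: (keys_subtrees Hw Hz).
have Hlb : lb <= lb < y by lia.
have Hyb : y <= y <= ub by lia.
have [z Hz] := transition_point_exists HT (Hmem lb ltac:(lia)) Hlb (Hmem y ltac:(lia)) Hyb.
have Hopp : tp_opposite lb y ub (number S 0) None by exists z.
have := alternations_le_hits Hval HT (Hmem lb ltac:(lia)) Hlb (Hmem y ltac:(lia)) Hyb
  Hserve (fun _ : true => Hopp).
by rewrite -/lb -/ub addn0; lia.
Qed.

(* Strong stability of X and of XX makes X balanced: the alternating queries
   of XX at an inner node go as often left as right. *)
Lemma stable_twice_balanced T X :
  strongly_stable T X -> strongly_stable T (X ++ X) -> balanced T X.
Proof.
move=> /andP [HX _] /andP [_ Hnodes]; split => // l x r Hw Hi.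
move: (allP Hnodes _ Hw); rewrite Hi /node_strongly_stable filter_cat.
exact: alternating_twice_balanced.
Qed.

Lemma inner_load_le_cost S X R c : full S ->
  strongly_stable (number S 0) X -> strongly_stable (number S 0) (X ++ X) ->
  serve (number S 0) X R = Some c ->
  \sum_(w <- subtrees (number S 0) | is_inner w) size [seq z <- X | z \in keys w]
  <= 4 * c.
Proof.
move=> Hf /andP [_ Hs1] /andP [_ Hs2] Hserve.
have Hstable (Y : seq nat) w : all (fun v => is_inner v ==> node_strongly_stable v Y)
    (subtrees (number S 0)) -> w \in subtrees (number S 0) -> is_inner w ->
    node_strongly_stable w Y.
  by move=> HY Hw Hi; move: (allP HY w Hw); rewrite Hi.
apply: (@leq_trans (\sum_(w <- subtrees (number S 0) | is_inner w)
    4 * tp_hits (lo (node_range w)) (mid (node_range w)) (hi (node_range w)) (number S 0) X R)).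
  rewrite big_seq_cond [X in _ <= X]big_seq_cond; apply: leq_sum => w /andP [Hw Hi].
  exact: node_load_le_hits Hf Hw Hi (Hstable _ _ Hs1 Hw Hi) (Hstable _ _ Hs2 Hw Hi) Hserve.
rewrite -big_distrr leq_mul2l /=.
have := hits_le_cost (inner_ranges_laminar S) (inner_ranges_valid Hf) Hserve.
by rewrite /inner_ranges big_map big_filter.
Qed.

Lemma serve_static t X :
  serve t X (nseq (size X) [::]) = Some (\sum_(x <- X) step_cost t x [::]).
Proof. by elim: X => [|x X IH] /=; [rewrite big_nil | rewrite IH big_cons]. Qed.

Lemma step_cost_static t x :
  sorted ltn (keys t) -> step_cost t x [::] <= size (path_keys t x).
Proof.
move=> Hs; rewrite /step_cost; apply: uniq_leq_size.
  exact/filter_uniq/(sorted_uniq ltn_trans ltnn).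
move=> y; rewrite mem_filter => /andP [/orP [//|] Hsp _].
by move: Hsp; rewrite /in_span; case: (subtree_at y t).
Qed.

Lemma classical_least (P : nat -> Prop) n :
  P n -> exists m, P m /\ forall j, P j -> m <= j.
Proof.
elim: n {-2}n (leqnn n) => [|n IH] m Hm HP.
  by exists m; split => // j _; lia.
case: (classic (exists j, P j /\ j < m)) => [[j [Hj Hjm]]|Hno].
  by apply: (IH j) => //; lia.
exists m; split => // j Hj; case: (leqP m j) => // Hjm.
by exfalso; apply: Hno; exists j.
Qed.

Lemma opt_cost_exists T X : exists c, opt_cost T X c.
Proof.
have [c [[R Hc] Hmin]] := classical_least (P := fun c => exists R, serve T X R = Some c)
  (ex_intro _ _ (serve_static T X)).
by exists c; split; [exists R | move=> R' c' H; apply: Hmin; exists R'].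
Qed.

Theorem opt_cost_bal_depth S X c : full S ->
  strongly_stable (number S 0) X -> strongly_stable (number S 0) (X ++ X) ->
  opt_cost (number S 0) X c ->
  Rle (Rmult (INR (size X)) (bal_depth (number S 0))) (Rmult 4 (INR c)) /\
  Rle (INR c) (Rmult (INR (size X)) (Rplus (bal_depth (number S 0)) R1)).
Proof.
move=> Hf Hs1 Hs2 [[R Hc] Hmin].
have HT : sorted ltn (keys (number S 0)) by rewrite keys_number; exact: iota_ltn_sorted.
have Hbal := stable_twice_balanced Hs1 Hs2.
rewrite -inner_load_sum // -path_length_sum //; split.
  rewrite -(INR_IZR_INZ 4) -mult_INR; apply/le_INR/leP.
  exact: inner_load_le_cost Hf Hs1 Hs2 Hc.
apply/le_INR/leP; apply: leq_trans (Hmin _ _ (serve_static _ X)) _.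
by apply: leq_sum => z _; apply: step_cost_static.
Qed.

Section Logarithms.
Local Open Scope R_scope.

Lemma ln2_pos : 0 < ln 2.
Proof. by have := ln_lt_2; lra. Qed.

Lemma lg_le a b : 0 < a -> a <= b -> lg a <= lg b.
Proof.
move=> Ha Hab; rewrite /lg; apply: Rmult_le_compat_r.
  by left; apply/Rinv_0_lt_compat/ln2_pos.
case: (Rle_lt_or_eq_dec _ _ Hab) => [H|->]; last exact: Rle_refl.
by left; apply: ln_increasing.
Qed.

Lemma lg_mult a b : 0 < a -> 0 < b -> lg (a * b) = lg a + lg b.
Proof. by move=> Ha Hb; rewrite /lg ln_mult //; field; apply/Rgt_not_eq/ln2_pos. Qed.

Lemma lg_pow a n : 0 < a -> lg (a ^ n) = INR n * lg a.
Proof. by move=> Ha; rewrite /lg ln_pow //; field; apply/Rgt_not_eq/ln2_pos. Qed.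

Lemma lg_2 : lg 2 = 1.
Proof. by rewrite /lg; field; apply/Rgt_not_eq/ln2_pos. Qed.

Lemma lg_2pow n : lg (2 ^ n) = INR n.
Proof. by rewrite lg_pow ?lg_2; lra. Qed.

Lemma lg_4 : lg 4 = 2.
Proof. by rewrite (_ : 4 = 2 ^ 2); [rewrite lg_2pow /=; lra | ring]. Qed.

Lemma lg_ge1 x : 2 <= x -> 1 <= lg x.
Proof. by move=> H; rewrite -lg_2; apply: lg_le; lra. Qed.

(* (1 - 1/n)^n <= 1/2, from Bernoulli's inequality (1 + 1/n)^n >= 2. *)
Lemma pow_one_minus_inv_le_half (n : nat) : (1 <= n)%N -> (1 - / INR n) ^ n <= / 2.
Proof.
move=> Hn.
have HN : 1 <= INR n by apply: (le_INR 1); apply/leP.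
have Hp : 0 < / INR n by apply: Rinv_0_lt_compat; lra.
have Hp1 : / INR n <= 1 by rewrite -Rinv_1; apply: Rinv_le_contravar; lra.
have Hbern := poly n (/ INR n) Hp.
rewrite (_ : INR n * / INR n = 1) in Hbern; last by field; lra.
have Hprod : (1 - / INR n) ^ n * (1 + / INR n) ^ n <= 1.
  rewrite -Rpow_mult_distr (_ : (1 - / INR n) * (1 + / INR n) = 1 - / INR n * / INR n);
    last by ring.
  apply: (Rle_trans _ (1 ^ n)); last by rewrite pow1; lra.
  by apply: pow_incr; split; nra.
have Ha : 0 <= (1 - / INR n) ^ n by apply: pow_le; lra.
nra.
Qed.

End Logarithms.

Lemma expn_INR m n : INR (m ^ n) = Rpow_def.pow (INR m) n.
Proof. by elim: n => [|n IH]; rewrite ?expn0 // expnS mult_INR IH. Qed.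

Section KRTrees.
Local Open Scope R_scope.

Lemma bal_depth_number s o : bal_depth (number s o) = bal_depth s.
Proof.
elim: s o => //= l IHl x r IHr o; rewrite IHl IHr.
by case: l {IHl} => [|? ? ?]; case: r {IHr} => [|? ? ?].
Qed.

(* A chain of j trunk nodes hanging copies of S: each trunk node halves the
   weight of what hangs below it. *)
Lemma bal_depth_chain j S : bal_depth (chain j S) = (2 + bal_depth S) * (1 - (/ 2) ^ j).
Proof.
elim: j => [|j IH]; first by rewrite /=; lra.
by rewrite [chain j.+1 S]/= bal_depth_inner; [rewrite IH /=; field | case: j {IH}].
Qed.

Lemma bal_depth_kr_shape k r : (1 <= k)%N ->
  bal_depth (kr_shape k r) =
  2 * (1 - / 2 ^ k) / (/ 2 ^ k) * (1 - (1 - / 2 ^ k) ^ r).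
Proof.
move=> Hk; have Hq : 0 < / 2 ^ k by apply/Rinv_0_lt_compat/pow_lt; lra.
elim: r => [|r IH]; first by rewrite /=; ring.
rewrite [kr_shape k r.+1]/= bal_depth_inner; last first.
  by case: (kr_shape k r) => [|? ? ?] //; case: (k.-1).
have E : (/ 2) ^ k.-1 = 2 * / 2 ^ k.
  by rewrite pow_inv; case: k Hk {Hq IH} => // k _ /=; field; apply: pow_nonzero; lra.
rewrite bal_depth_chain IH E -tech_pow_Rmult.
by set q := / 2 ^ k; set a := (1 - q) ^ r; field; apply: Rgt_not_eq.
Qed.

Lemma bal_depth_kr_tree k : (1 <= k)%N ->
  INR (2 ^ k) - 1 <= bal_depth (kr_tree k (2 ^ k)) <= 2 * (INR (2 ^ k) - 1).
Proof.
move=> Hk; rewrite /kr_tree bal_depth_number bal_depth_kr_shape // expn_INR /=.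
have Hh := pow_one_minus_inv_le_half (n := (2 ^ k)%N) ltac:(by rewrite expn_gt0).
rewrite expn_INR /= in Hh.
have H1 : 1 <= (1 + 1) ^ k by apply: pow_R1_Rle; lra.
set N := (1 + 1) ^ k in H1 Hh *; set a := (1 - / N) ^ (2 ^ k)%N in Hh *.
have HN : / N <= 1 by rewrite -Rinv_1; apply: Rinv_le_contravar; lra.
have Ha : 0 <= a by apply: pow_le; lra.
rewrite (_ : 2 * (1 - / N) / / N = 2 * (N - 1)); last by field; lra.
split; nra.
Qed.

End KRTrees.

Lemma size_chain j S : bst_size (chain j S) = j * (bst_size S + 1) + 1.
Proof. by elim: j => //= j ->; lia. Qed.

Lemma size_kr_shape_succ k r : (1 <= k)%N ->
  bst_size (kr_shape k r.+1) = k * (bst_size (kr_shape k r) + 1) + 1.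
Proof. by move=> Hk /=; rewrite size_chain; case: k Hk => // k _ /=; lia. Qed.

Lemma size_kr_shape_bounds k r : (2 <= k)%N ->
  k ^ r <= bst_size (kr_shape k r) /\ bst_size (kr_shape k r) + 1 <= 2 * (2 * k) ^ r.
Proof.
move=> Hk; elim: r => [|r [IH1 IH2]] //.
by rewrite size_kr_shape_succ; last lia; rewrite !expnS; split; nia.
Qed.

Lemma full_kr_shape k r : full (kr_shape k r).
Proof.
have Hchain j S : full S -> full (chain j S).
  by move=> HS; elim: j => //= j IH; apply: full_node.
by elim: r => //= r IH; apply: full_node => //; apply: Hchain.
Qed.

Section Asymptotics.
Local Open Scope R_scope.

Lemma lg_size_bounds k s : (2 <= k)%N ->
  (k ^ (2 ^ k) <= s)%N -> (s + 1 <= 2 * (2 * k) ^ (2 ^ k))%N ->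
  INR (2 ^ k) * lg (INR k) <= lg (INR s) <= 4 * INR (2 ^ k) * lg (INR k).
Proof.
move=> Hk Hs1 Hs2.
have E2 : INR 2 = 2 by rewrite /=; ring.
have Hk2 : 2 <= INR k by rewrite -E2; apply/le_INR/leP.
have HN : INR (2 ^ k) = 2 ^ k by rewrite expn_INR E2.
have HN1 : 1 <= INR (2 ^ k) by rewrite HN; apply: pow_R1_Rle; lra.
have Hl1 : 1 <= lg (INR k) by apply: lg_ge1.
have HsL : INR k ^ (2 ^ k) <= INR s by rewrite -expn_INR; apply/le_INR/leP.
have HsU : INR s <= 2 * (2 * INR k) ^ (2 ^ k).
  have : INR (s + 1) <= INR (2 * (2 * k) ^ (2 ^ k)) by apply/le_INR/leP.
  by rewrite plus_INR mult_INR expn_INR mult_INR E2 /=; lra.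
split.
  apply: (Rle_trans _ (lg (INR k ^ (2 ^ k)))); last by apply: lg_le => //; apply: pow_lt; lra.
  by rewrite lg_pow; [exact: Rle_refl | lra].
apply: (Rle_trans _ (lg (2 * (2 * INR k) ^ (2 ^ k)))).
  by apply: lg_le HsU; apply: (Rlt_le_trans _ _ _ _ HsL); apply: pow_lt; lra.
rewrite lg_mult ?lg_pow ?lg_mult ?lg_2; try lra; last by apply: pow_lt; lra.
by nra.
Qed.

(* Hence lg lg lg n = Theta(lg k), since lg lg n = Theta(k). *)
Lemma lglglg_bounds k L : (2 <= k)%N ->
  INR (2 ^ k) * lg (INR k) <= L -> L <= 4 * INR (2 ^ k) * lg (INR k) ->
  lg (INR k) <= lg (lg L) <= 3 * lg (INR k).
Proof.
move=> Hk HL1 HL2.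
have E2 : INR 2 = 2 by rewrite /=; ring.
have Hk2 : 2 <= INR k by rewrite -E2; apply/le_INR/leP.
have HN : INR (2 ^ k) = 2 ^ k by rewrite expn_INR E2.
have HN1 : 1 <= INR (2 ^ k) by rewrite HN; apply: pow_R1_Rle; lra.
have Hl1 : 1 <= lg (INR k) by apply: lg_ge1.
have Hlk : lg (INR k) <= INR k.
  rewrite -{2}(lg_2pow k); apply: lg_le; first lra.
  by rewrite -E2 -expn_INR; apply/le_INR/leP/ltnW/ltn_expl.
have HM1 : INR k <= lg L.
  rewrite -lg_2pow -HN; apply: lg_le; first lra.
  by nra.
have HM2 : lg L <= 3 * INR k.
  apply: (Rle_trans _ (lg (4 * INR (2 ^ k) * lg (INR k)))); first by apply: lg_le => //; nra.
  rewrite (@lg_mult (4 * INR (2 ^ k))) ?(@lg_mult 4) ?lg_4 ?HN ?lg_2pow; try lra.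
  have : lg (lg (INR k)) <= lg (INR k) by apply: lg_le; lra.
  by lra.
split.
  by apply: (Rle_trans _ (lg (INR k))); [lra | apply: lg_le; lra].
apply: (Rle_trans _ (lg (3 * INR k))); first by apply: lg_le; lra.
rewrite lg_mult; try lra.
have : lg 3 <= 2 by rewrite -lg_4; apply: lg_le; lra.
by lra.
Qed.

Lemma theta_transfer m L D l N C B : 0 <= m -> 1 <= l -> l <= D -> D <= 3 * l ->
  N * l <= L -> L <= 4 * N * l -> 2 <= N -> N - 1 <= B -> B <= 2 * (N - 1) ->
  m * B <= 4 * C -> C <= m * (B + 1) ->
  1 / 32 * (m * L / D) <= C /\ C <= 6 * (m * L / D).
Proof.
move=> Hm Hl HD1 HD2 HL1 HL2 HN HB1 HB2 HC1 HC2.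
have HD : 0 < D by lra.
set f := m * L / D.
have Hf : f * D = m * L by rewrite /f; field; lra.
have Hfu : f <= 4 * m * N.
  have H1 : m * L <= m * (4 * N * l) by apply: Rmult_le_compat_l.
  have H2 : m * (4 * N * l) <= (4 * m * N) * D.
    rewrite (_ : m * (4 * N * l) = (4 * m * N) * l); last by ring.
    by apply: Rmult_le_compat_l => //; nra.
  by apply: (Rmult_le_reg_r D) => //; lra.
have Hfl : m * N / 3 <= f.
  have H3 : m * (N * l) <= m * L by apply: Rmult_le_compat_l.
  have H4 : (m * N / 3) * D <= m * (N * l).
    rewrite (_ : m * (N * l) = (m * N / 3) * (3 * l)); last by field.
    by apply: Rmult_le_compat_l => //; nra.
  by apply: (Rmult_le_reg_r D) => //; lra.
have H5 : m * (N - 1) <= m * B by apply: Rmult_le_compat_l.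
have H6 : m * B <= m * (2 * (N - 1)) by apply: Rmult_le_compat_l.
have H7 : 0 <= m * N by nra.
by split; nra.
Qed.

End Asymptotics.

Theorem lemma10 :
  exists (c1 c2 : R) (K : nat), Rlt 0 c1 /\ Rlt 0 c2 /\
  forall k : nat, (2 <= k)%N -> (K <= k)%N ->
  let T := kr_tree k (2 ^ k) in
  let n := INR (bst_size T) in
  forall X : seq nat, atomic T X ->
  let f := Rdiv (Rmult (INR (size X)) (lg n)) (lg (lg (lg n))) in
  exists c : nat, opt_cost T X c /\ Rle (Rmult c1 f) (INR c) /\ Rle (INR c) (Rmult c2 f).
Proof.
exists (Rdiv 1 32), (IZR 6), 2; split; first lra; split; first lra.
move=> k Hk _ T n X [_ [Hrep _]] f.
have Hs1 : strongly_stable T X by have := Hrep 1 isT; rewrite /= cats0.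
have Hs2 : strongly_stable T (X ++ X) by have := Hrep 2 isT; rewrite /= cats0.
have [c Hc] := opt_cost_exists T X; exists c; split => //.
have [Hlow Hup] := opt_cost_bal_depth (full_kr_shape k (2 ^ k)) Hs1 Hs2 Hc.
have [HB1 HB2] := bal_depth_kr_tree (ltnW Hk).
have [Hsz1 Hsz2] := size_kr_shape_bounds (2 ^ k) Hk.
have [HL1 HL2] := lg_size_bounds Hk Hsz1 Hsz2.
have [HD1 HD2] := lglglg_bounds Hk HL1 HL2.
have Hl : Rle 1 (lg (INR k)).
  by apply: lg_ge1; rewrite (_ : IZR 2 = INR 2); [apply/le_INR/leP | rewrite /=; ring].
have HN : Rle 2 (INR (2 ^ k)).
  rewrite (_ : IZR 2 = INR 2); last by rewrite /=; ring.
  by apply/le_INR/leP; apply: leq_trans Hk (ltnW (ltn_expl _ _)).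
rewrite /f /n /T /kr_tree size_number.
exact: theta_transfer (pos_INR _) Hl HD1 HD2 HL1 HL2 HN HB1 HB2 Hlow Hup.
Qed.
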